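(* Let $(F_n)_{n\ge 0}$ be the Fibonacci sequence with $F_0=0$, $F_1=1$, $F_n=F_{n-1}+F_{n-2}$, and let $b_n=\dfrac{F_{7n}}{13}$ for $n\ge 0$. For every integer $m\ge 0$, $$[\underbrace{29,29,\dots,29}_{m+1}]=\frac{b_{m+2}}{b_{m+1}},$$ where the continued fraction has $m+1$ entries all equal to $29$.
   Context: For numbers $a_0,a_1,\dots,a_m$, the finite simple continued fraction $[a_0,a_1,\dots,a_m]$ denotes $a_0+\cfrac{1}{a_1+\cfrac{1}{\ddots+\cfrac{1}{a_m}}}$, evaluated as a rational number; $[a_0]=a_0$. *)

From mathcomp Require Import all_boot all_order all_algebra.
Set Implicit Arguments. Unset Strict Implicit. Unset Printing Implicit Defensive.
Import Order.TTheory GRing.Theory Num.Theory.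
Local Open Scope ring_scope.

Fixpoint fib (n : nat) : nat :=
  match n with
  | 0 => 0
  | 1 => 1
  | (m.+1 as k).+1 => fib k + fib m
  end%N.

(* finite simple continued fraction [a_0, ..., a_m]; [a_0] = a_0.
   The empty list is never used in the statement (value 0 by convention). *)
Fixpoint cf (s : seq rat) : rat :=
  match s with
  | [::] => 0
  | [:: a] => a
  | a :: t => a + (cf t)^-1
  end.

Definition b (n : nat) : rat := (fib (7 * n))%:R / 13%:R.

From mathcomp Require Import all_boot all_order all_algebra zify ring.
Local Open Scope ring_scope.
Import GRing.Theory Num.Theory.

(* The constant continued fraction [a, ..., a] with m+1 entries equals u_(m+2) / u_(m+1)
   for the solution of u_(n+2) = a u_(n+1) + u_n with u_0 = 0.  Since
   F_(n+14) = L_7 F_(n+7) + F_n with Lucas number L_7 = 29, the sequence F_(7n) is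
   such a solution for a = 29, and the factor 1/13 of b cancels in the ratio. *)

Lemma cf_cons_cons (x y : rat) (t : seq rat) : cf [:: x, y & t] = x + (cf (y :: t))^-1.
Proof. by []. Qed.

Section ConstantContinuedFraction.

Variables (a : rat) (u : nat -> rat).
Hypotheses (u0 : u 0 = 0) (uSS : forall n, u n.+2 = a * u n.+1 + u n)
           (u_neq0 : forall n, u n.+1 != 0).

Lemma cf_nseq_ratio m : cf (nseq m.+1 a) = u m.+2 / u m.+1.
Proof.
elim: m => [|m IH]; first by rewrite uSS u0 addr0 mulfK.
by rewrite cf_cons_cons IH invf_div (uSS m.+1) mulrDl mulfK.
Qed.

End ConstantContinuedFraction.

Lemma fibSS n : fib n.+2 = (fib n.+1 + fib n)%N.
Proof. by []. Qed.

Lemma fib_gt0 n : (0 < fib n.+1)%N.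
Proof.
elim/ltn_ind: n => [[|[|n]]] IH //=.
exact: ltn_addr (IH n.+1 _).
Qed.

Lemma fib_add14 n : fib (n + 14) = (29 * fib (n + 7) + fib n)%N.
Proof.
elim/ltn_ind: n => [[|[|n]]] IH //.
have -> : (n.+2 + 14 = (n + 14).+2)%N by lia.
have -> : (n.+2 + 7 = (n + 7).+2)%N by lia.
rewrite !fibSS -!addSn !IH //; lia.
Qed.

Theorem theorem8 (m : nat) :
  cf (nseq m.+1 (29%:R : rat)) = b m.+2 / b m.+1.
Proof.
pose u n : rat := (fib (7 * n))%:R.
have u_neq0 n : u n.+1 != 0 by rewrite pnatr_eq0 -lt0n mulnS addSn fib_gt0.
have -> : b m.+2 / b m.+1 = u m.+2 / u m.+1.
  by rewrite /b -/(u m.+2) -/(u m.+1); field; rewrite u_neq0.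
apply: cf_nseq_ratio => // n.
rewrite -natrM -natrD /u.
have -> : (7 * n.+2 = 7 * n + 14)%N by lia.
have -> : (7 * n.+1 = 7 * n + 7)%N by lia.
by rewrite fib_add14.
Qed.
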